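(* Let $v$ satisfy the standing assumptions and the doubling condition, with constant $D$. Let $\{n_k\}_{k\ge1}$ be a sequence of positive integers with $n_{k+1}\ge\lambda n_k$ for all $k$, where $\lambda>1$, and let $u(z)=\operatorname{Re}\sum_k a_{n_k}z^{n_k}$, $a_{n_k}\in\mathbb{C}$, where the series converges in $\mathbb{D}$. Then $u\in k^\infty_v$ if and only if there exists $\gamma>0$ such that $\sum_{n_k\le N}|a_{n_k}|\le\gamma\, g(N)$ for every $N\in\mathbb{N}$.
   Context: Standing assumptions: $v:[0,1)\to[1,\infty)$ is positive, increasing, continuous, $v(0)=1$, $\lim_{r\to1}v(r)=+\infty$; $g(x)=v(1-x^{-1})$ for $x\ge1$. Doubling condition: there is $D\ge1$ with $v(1-d)\le D\,v(1-2d)$ for all $d\in(0,1/2]$, equivalently $g(2x)\le D g(x)$ for $x\ge1$. $k^\infty_v$ is the set of real harmonic functions $u$ on the unit disk $\mathbb{D}$ for which there is $K>0$ with $u(z)\le K v(|z|)$ for all $z\in\mathbb{D}$. *)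

From Stdlib Require Import Reals Lra Lia.
Open Scope R_scope.

(* Standing assumptions on v : [0,1) -> [1, +oo). v is a total function R -> R,
   only its values on [0,1) matter. *)
Definition standing (v : R -> R) : Prop :=
  (forall r, 0 <= r < 1 -> 1 <= v r) /\
  (forall r s, 0 <= r -> r < s -> s < 1 -> v r < v s) /\
  (forall r, 0 <= r < 1 -> forall eps, eps > 0 -> exists delta, delta > 0 /\
      forall s, 0 <= s < 1 -> Rabs (s - r) < delta -> Rabs (v s - v r) < eps) /\
  v 0 = 1 /\
  (forall M, exists delta, delta > 0 /\ forall r, 1 - delta < r < 1 -> M < v r).

Definition g (v : R -> R) (x : R) : R := v (1 - / x).

Definition doubling (v : R -> R) (D : R) : Prop :=
  1 <= D /\ forall d, 0 < d <= / 2 -> v (1 - d) <= D * v (1 - 2 * d).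

(* Complex coefficients a_{n_k} = ar k + i ai k; z = r e^{i theta}.
   Re (a z^m) = r^m (ar cos(m theta) - ai sin(m theta)),
   Im (a z^m) = r^m (ar sin(m theta) + ai cos(m theta)). *)
Definition re_term (n : nat -> nat) (ar ai : nat -> R) (r th : R) (k : nat) : R :=
  r ^ (n k) * (ar k * cos (INR (n k) * th) - ai k * sin (INR (n k) * th)).
Definition im_term (n : nat -> nat) (ar ai : nat -> R) (r th : R) (k : nat) : R :=
  r ^ (n k) * (ar k * sin (INR (n k) * th) + ai k * cos (INR (n k) * th)).

Definition converges_in_disk (n : nat -> nat) (ar ai : nat -> R) : Prop :=
  forall r th, 0 <= r < 1 ->
    (exists l, Un_cv (fun N => sum_f_R0 (re_term n ar ai r th) N) l) /\
    (exists l, Un_cv (fun N => sum_f_R0 (im_term n ar ai r th) N) l).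

Definition u_value (n : nat -> nat) (ar ai : nat -> R) (r th l : R) : Prop :=
  Un_cv (fun N => sum_f_R0 (re_term n ar ai r th) N) l.

(* u in k^infty_v : exists K > 0, u(z) <= K v(|z|) on the disk
   (u is harmonic, being the real part of a convergent power series). *)
Definition in_kv (v : R -> R) (n : nat -> nat) (ar ai : nat -> R) : Prop :=
  exists K, K > 0 /\ forall r th l, 0 <= r < 1 -> u_value n ar ai r th l -> l <= K * v r.

Definition cmod (x y : R) : R := sqrt (x * x + y * y).

(* sum_{n_k <= N} |a_{n_k}|; since n is strictly increasing with n_0 >= 1,
   every k with n_k <= N satisfies k <= N. *)
Definition coef_sum (n : nat -> nat) (ar ai : nat -> R) (N : nat) : R :=
  sum_f_R0 (fun k => if Nat.leb (n k) N then cmod (ar k) (ai k) else 0) N.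

(* Necessity. Pair u(r e^{it}) with the Riesz product P_F(t) = prod_{k in F} (1 + cos (n_k t + arg a_k)):
   P_F >= 0 has mean 1, and if the frequencies of F are lacunary with a large ratio and well separated
   from all other n_j, the mean of u P_F is exactly (1/2) sum_{k in F} |a_k| r^{n_k}. Hence that sum is at
   most 2 K v(r). The Hadamard gaps split the indices into finitely many residue classes, each lacunary
   with the required ratio, so sum_k |a_k| r^{n_k} over any initial segment is O(v(r)); with r = 1 - 1/(2N),
   where r^{n_k} >= 1/2 for n_k <= N, and doubling, this gives sum_{n_k <= N} |a_k| <= gamma g(N).
   All means over t are taken exactly, as averages over the M-th roots of unity for M large.

   Sufficiency. |u(r e^{it})| <= sum_k |a_k| r^{n_k}. With N0 about 1/(1-r), the terms with
   2^j N0 < n_k <= 2^{j+1} N0 carry r^{n_k} <= 2^{-2^j}, their coefficients sum to at most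
   gamma g(2^{j+1} N0) <= gamma D^{j+1} v(r), and sum_j D^{j+1} 2^{-2^j} converges. *)

From Stdlib Require Import Reals Lra Lia ZArith List.
Open Scope R_scope.

(** * Finite sums *)

Fixpoint sum_lt (f : nat -> R) (n : nat) : R :=
  match n with O => 0 | S n' => sum_lt f n' + f n' end.

Lemma sum_lt_ext f g n : (forall j, (j < n)%nat -> f j = g j) -> sum_lt f n = sum_lt g n.
Proof. induction n as [|n IH]; simpl; intros H; [reflexivity|]. rewrite IH, H; auto. Qed.

Lemma sum_lt_add f g n : sum_lt (fun j => f j + g j) n = sum_lt f n + sum_lt g n.
Proof. induction n as [|n IH]; simpl; [lra|rewrite IH; lra]. Qed.

Lemma sum_lt_scal c f n : sum_lt (fun j => c * f j) n = c * sum_lt f n.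
Proof. induction n as [|n IH]; simpl; [lra|rewrite IH; lra]. Qed.

Lemma sum_lt_const c n : sum_lt (fun _ => c) n = INR n * c.
Proof. induction n as [|n IH]; simpl sum_lt; [simpl; lra|rewrite IH, S_INR; lra]. Qed.

Lemma sum_lt_le f g n : (forall j, (j < n)%nat -> f j <= g j) -> sum_lt f n <= sum_lt g n.
Proof.
  induction n as [|n IH]; simpl; intros H; [lra|].
  assert (f n <= g n) by auto. assert (sum_lt f n <= sum_lt g n) by auto. lra.
Qed.

Lemma sum_lt_eq0 f n : (forall j, (j < n)%nat -> f j = 0) -> sum_lt f n = 0.
Proof. intros H. rewrite (sum_lt_ext f (fun _ => 0)) by auto. rewrite sum_lt_const; lra. Qed.

Lemma sum_lt_nonneg f n : (forall j, 0 <= f j) -> 0 <= sum_lt f n.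
Proof. intros H. induction n as [|n IH]; simpl; [lra|]. pose proof (H n). lra. Qed.

Lemma sum_lt_abs f n : Rabs (sum_lt f n) <= sum_lt (fun j => Rabs (f j)) n.
Proof.
  induction n as [|n IH]; simpl; [rewrite Rabs_R0; lra|].
  eapply Rle_trans; [apply Rabs_triang|]. lra.
Qed.

Lemma sum_lt_swap (f : nat -> nat -> R) n m :
  sum_lt (fun i => sum_lt (fun j => f i j) m) n = sum_lt (fun j => sum_lt (fun i => f i j) n) m.
Proof.
  induction n as [|n IH]; simpl; [symmetry; apply sum_lt_eq0; auto|].
  rewrite IH, <- sum_lt_add. reflexivity.
Qed.

Lemma sum_lt_telescope (h : nat -> R) n : sum_lt (fun j => h (S j) - h j) n = h n - h O.
Proof. induction n as [|n IH]; simpl; [lra|rewrite IH; lra]. Qed.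

Lemma sum_lt_split f a p : sum_lt f (a + p) = sum_lt f a + sum_lt (fun i => f (a + i)%nat) p.
Proof.
  induction p as [|p IH]; simpl; [rewrite Nat.add_0_r; lra|].
  rewrite Nat.add_succ_r. simpl. rewrite IH. lra.
Qed.

Lemma sum_lt_mono f a b : (forall j, 0 <= f j) -> (a <= b)%nat -> sum_lt f a <= sum_lt f b.
Proof.
  intros H Hab. replace b with (a + (b - a))%nat by lia. rewrite sum_lt_split.
  pose proof (sum_lt_nonneg (fun i => f (a + i)%nat) (b - a) (fun i => H _)). lra.
Qed.

Lemma sum_lt_ge_term f j n : (forall i, 0 <= f i) -> (j < n)%nat -> f j <= sum_lt f n.
Proof.
  intros Hf Hj. pose proof (sum_lt_mono f (S j) n Hf Hj). simpl in H.
  pose proof (sum_lt_nonneg f j Hf). lra.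
Qed.

Lemma sum_lt_blocks f s m :
  sum_lt f (s * m) = sum_lt (fun c => sum_lt (fun i => f (c + s * i)%nat) m) s.
Proof.
  induction m as [|m IH].
  - rewrite Nat.mul_0_r. symmetry. apply sum_lt_eq0. auto.
  - replace (s * S m)%nat with (s * m + s)%nat by lia. rewrite sum_lt_split, IH.
    simpl. rewrite sum_lt_add. f_equal. apply sum_lt_ext; intros. f_equal. lia.
Qed.

Lemma sum_f_R0_sum_lt f N : sum_f_R0 f N = sum_lt f (S N).
Proof. induction N as [|N IH]; simpl; [lra|]. simpl in IH. rewrite IH. reflexivity. Qed.

Definition sum_list (f : nat -> R) (F : list nat) : R := fold_right (fun k acc => f k + acc) 0 F.

Lemma sum_list_scal c f F : sum_list (fun k => c * f k) F = c * sum_list f F.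
Proof. induction F as [|k F IH]; simpl; [ring|]. rewrite IH. ring. Qed.

Lemma sum_lt_delta f t N : (t < N)%nat ->
  sum_lt (fun k => if Nat.eq_dec k t then f k else 0) N = f t.
Proof.
  induction N as [|N IH]; intros H; [lia|]. simpl. destruct (Nat.eq_dec N t) as [->|E].
  - rewrite sum_lt_eq0; [lra|]. intros j Hj. destruct (Nat.eq_dec j t); [lia|auto].
  - rewrite IH by lia. lra.
Qed.

Lemma sum_lt_indicator f F N : NoDup F -> (forall k, In k F -> (k < N)%nat) ->
  sum_lt (fun k => if in_dec Nat.eq_dec k F then f k else 0) N = sum_list f F.
Proof.
  induction F as [|t F IH]; intros HD HF.
  - apply sum_lt_eq0. auto.
  - inversion HD as [|? ? Ht HD']; subst.
    rewrite (sum_lt_ext _ (fun k => (if Nat.eq_dec k t then f k else 0)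
                            + (if in_dec Nat.eq_dec k F then f k else 0))).
    + rewrite sum_lt_add, sum_lt_delta, IH; auto; [intros; apply HF; simpl; auto..].
    + intros j _. destruct (in_dec Nat.eq_dec j (t :: F)) as [I|NI];
        destruct (in_dec Nat.eq_dec j F) as [I'|NI'];
        destruct (Nat.eq_dec j t) as [<-|E]; simpl In in *; try tauto; try lra.
      intuition congruence.
Qed.

Lemma pow_le1 r m : 0 <= r <= 1 -> r ^ m <= 1.
Proof. intros Hr. rewrite <- (pow1 m). apply pow_incr. exact Hr. Qed.

Lemma pow_le1_antimono q a b : 0 <= q <= 1 -> (a <= b)%nat -> q ^ b <= q ^ a.
Proof.
  intros Hq Hab. replace b with (a + (b - a))%nat by lia. rewrite pow_add.
  assert (q ^ (b - a) <= 1) by (rewrite <- (pow1 (b - a)); apply pow_incr; lra).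
  pose proof (pow_le q a (proj1 Hq)). pose proof (pow_le q (b - a) (proj1 Hq)). nra.
Qed.

Lemma pow2_gt j : (j < 2 ^ j)%nat.
Proof. induction j; simpl; lia. Qed.

Lemma bernoulli x m : -1 <= x -> 1 + INR m * x <= (1 + x) ^ m.
Proof.
  intros Hx. induction m as [|m IH]; [simpl; lra|]. rewrite S_INR. simpl pow.
  assert ((1 + x) * (1 + INR m * x) <= (1 + x) * (1 + x) ^ m) by (apply Rmult_le_compat_l; lra).
  pose proof (pos_INR m). nra.
Qed.

Lemma pow_unbounded lam Q : 1 < lam -> exists s, (0 < s)%nat /\ Q <= lam ^ s.
Proof.
  intros Hl. destruct (INR_unbounded (Q / (lam - 1))) as [s Hs]. exists (S s). split; [lia|].
  pose proof (bernoulli (lam - 1) (S s) ltac:(lra)) as B. replace (1 + (lam - 1)) with lam in B by ring.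
  rewrite S_INR in B. apply Rmult_lt_compat_r with (r := lam - 1) in Hs; [|lra].
  unfold Rdiv in Hs. rewrite Rmult_assoc, Rinv_l in Hs by lra. nra.
Qed.

Lemma one_sub_inv_pow_ge_half N : (1 <= N)%nat -> / 2 <= (1 - / (2 * INR N)) ^ N.
Proof.
  intros HN. assert (1 <= INR N) by (apply (le_INR 1); auto).
  assert (/ (2 * INR N) <= 1) by (rewrite <- Rinv_1; apply Rinv_le_contravar; lra).
  pose proof (bernoulli (- / (2 * INR N)) N ltac:(lra)) as B.
  replace (INR N * - / (2 * INR N)) with (- / 2) in B by (field; lra).
  replace (1 - / (2 * INR N)) with (1 + - / (2 * INR N)) by ring. lra.
Qed.

Lemma one_sub_inv_pow_le_half m : (1 <= m)%nat -> (1 - / INR m) ^ m <= / 2.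
Proof.
  intros Hm. assert (HmR : 1 <= INR m) by (apply (le_INR 1); auto).
  assert (0 < / INR m <= 1) by
    (split; [apply Rinv_0_lt_compat; lra|rewrite <- Rinv_1; apply Rinv_le_contravar; lra]).
  pose proof (bernoulli (/ INR m) m ltac:(lra)) as B. rewrite Rinv_r in B by lra.
  assert (Hp : (1 - / INR m) ^ m * (1 + / INR m) ^ m <= 1).
  { rewrite <- Rpow_mult_distr.
    apply Rle_trans with (1 ^ m); [apply pow_incr; nra|rewrite pow1; lra]. }
  assert (0 <= (1 - / INR m) ^ m) by (apply pow_le; lra).
  nra.
Qed.

Lemma sum_lt_geom q a p : sum_lt (fun i => q ^ (a + i)) p * (1 - q) = q ^ a - q ^ (a + p).
Proof.
  induction p as [|p IH]; simpl; [rewrite Nat.add_0_r; ring|].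
  rewrite Rmult_plus_distr_r, IH, Nat.add_succ_r. simpl. ring.
Qed.

Lemma sum_lt_ratio_bound b J0 : (forall j, 0 <= b j) -> (forall j, (J0 <= j)%nat -> b (S j) <= b j / 2) ->
  forall J, sum_lt b J <= sum_lt b J0 + 2 * b J0.
Proof.
  intros Hb Hr J.
  assert (Hp : forall p, sum_lt (fun i => b (J0 + i)%nat) p + 2 * b (J0 + p)%nat <= 2 * b J0).
  { induction p as [|p IH]; simpl; [rewrite Nat.add_0_r; lra|].
    rewrite Nat.add_succ_r. pose proof (Hr (J0 + p)%nat ltac:(lia)). lra. }
  destruct (le_lt_dec J J0).
  - pose proof (sum_lt_mono b J J0 Hb l). pose proof (Hb J0). lra.
  - replace J with (J0 + (J - J0))%nat by lia. rewrite sum_lt_split.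
    pose proof (Hp (J - J0)%nat). pose proof (Hb (J0 + (J - J0))%nat). lra.
Qed.

Lemma series_terms_eventually_le1 f l : Un_cv (fun N => sum_f_R0 f N) l ->
  exists N0, forall k, (N0 <= k)%nat -> Rabs (f k) <= 1.
Proof.
  intros H. destruct (H (1 / 2)) as [N HN]; [lra|]. exists (S N). intros [|k] Hk; [lia|].
  pose proof (HN (S k) ltac:(lia)). pose proof (HN k ltac:(lia)). unfold Rdist in *.
  replace (f (S k)) with ((sum_f_R0 f (S k) - l) - (sum_f_R0 f k - l)) by (simpl; ring).
  eapply Rle_trans; [apply Rabs_triang|]. rewrite Rabs_Ropp. lra.
Qed.

Lemma Un_cv_sum_f_R0_tail f l k eps : Un_cv (fun N => sum_f_R0 f N) l ->
  (forall p, Rabs (sum_lt (fun i => f (S k + i)%nat) p) <= eps) -> Rabs (l - sum_f_R0 f k) <= eps.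
Proof.
  intros Hl Hp. destruct (Rle_dec (Rabs (l - sum_f_R0 f k)) eps) as [|Hn]; auto. exfalso.
  destruct (Hl (Rabs (l - sum_f_R0 f k) - eps)) as [N HN]; [lra|].
  pose proof (HN (k + N)%nat ltac:(lia)) as H. unfold Rdist in H.
  rewrite !sum_f_R0_sum_lt, <- Nat.add_succ_l, sum_lt_split in *.
  pose proof (Hp N). set (B := sum_lt (fun i => f (S k + i)%nat) N) in *.
  set (A := sum_lt f (S k) + B - l) in *.
  replace (l - sum_lt f (S k)) with (B - A) in * by (unfold A; ring).
  pose proof (Rabs_triang B (- A)) as T. rewrite Rabs_Ropp in T.
  replace (B + - A) with (B - A) in T by ring. lra.
Qed.

Lemma Un_cv_le_const u l B : Un_cv u l -> (forall m, u m <= B) -> l <= B.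
Proof.
  intros Hu Hb. destruct (Rle_dec l B) as [|Hn]; auto. exfalso.
  destruct (Hu (l - B)) as [N HN]; [lra|]. specialize (HN N (le_n N)). specialize (Hb N).
  unfold Rdist in HN. pose proof (Rle_abs (l - u N)). rewrite Rabs_minus_sym in HN. lra.
Qed.

Lemma geometric_tail_small q eps : 0 <= q < 1 -> 0 < eps ->
  exists k0, forall k, (k0 <= k)%nat -> forall p, sum_lt (fun i => 2 * q ^ (S k + i)) p <= eps.
Proof.
  intros Hq He.
  destruct (pow_lt_1_zero q ltac:(rewrite Rabs_right; lra) (eps * (1 - q) / 2)) as [k0 Hk0].
  { apply Rmult_lt_0_compat; [apply Rmult_lt_0_compat|]; lra. }
  exists k0. intros k Hk p. rewrite sum_lt_scal.
  pose proof (sum_lt_geom q (S k) p). pose proof (pow_le q (S k + p) (proj1 Hq)).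
  pose proof (Hk0 (S k) ltac:(lia)) as Hsmall. rewrite Rabs_right in Hsmall by (apply Rle_ge, pow_le; lra).
  assert (sum_lt (fun i => q ^ (S k + i)) p * (1 - q) <= eps * (1 - q) / 2) by lra.
  apply Rmult_le_reg_r with ((1 - q) / 2); [lra|]. lra.
Qed.

(** * Discrete orthogonality of trigonometric polynomials *)

(* [trig m a b t] is Re((a + i b) e^{i m t}). *)
Definition trig (m : Z) (a b t : R) : R := a * cos (IZR m * t) - b * sin (IZR m * t).

Lemma trig0 a b t : trig 0 a b t = a.
Proof. unfold trig. rewrite Rmult_0_l, cos_0, sin_0. ring. Qed.

Lemma trig_opp m a b t : trig (- m) a b t = trig m a (- b) t.
Proof.
  unfold trig. rewrite opp_IZR, Ropp_mult_distr_l_reverse, cos_neg, sin_neg. ring.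
Qed.

Lemma trig_mul m p a b c d t :
  trig m a b t * trig p c d t =
  / 2 * trig (m + p) (a * c - b * d) (a * d + b * c) t
  + / 2 * trig (m - p) (a * c + b * d) (b * c - a * d) t.
Proof.
  unfold trig. rewrite plus_IZR, minus_IZR.
  replace ((IZR m + IZR p) * t) with (IZR m * t + IZR p * t) by ring.
  replace ((IZR m - IZR p) * t) with (IZR m * t - IZR p * t) by ring.
  rewrite cos_minus, sin_minus, cos_plus, sin_plus. field.
Qed.

Definition grid (M j : nat) : R := 2 * PI * INR j / INR M.
Definition grid_sum (M : nat) (f : R -> R) : R := sum_lt (fun j => f (grid M j)) M.

Lemma grid_sum_ext M f g : (forall t, f t = g t) -> grid_sum M f = grid_sum M g.
Proof. intros H. apply sum_lt_ext. auto. Qed.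

Lemma grid_sum_le M f g : (forall t, f t <= g t) -> grid_sum M f <= grid_sum M g.
Proof. intros H. apply sum_lt_le. auto. Qed.

Lemma sin_pi_frac_neq0 (m M : nat) : (0 < m < M)%nat -> sin (PI * INR m / INR M) <> 0.
Proof.
  intros Hm. assert (0 < INR m) by (apply lt_0_INR; lia).
  assert (INR m < INR M) by (apply lt_INR; lia).
  apply Rgt_not_eq, sin_gt_0.
  - apply Rdiv_lt_0_compat; [apply Rmult_lt_0_compat; [apply PI_RGT_0|]|]; lra.
  - apply Rmult_lt_reg_r with (INR M); [lra|]. unfold Rdiv.
    rewrite Rmult_assoc, Rinv_l, Rmult_1_r by lra.
    apply Rmult_lt_compat_l; [apply PI_RGT_0|lra].
Qed.

(* Telescoping against [2 sin (x/2)], with [x = 2 pi m / M] the grid step at frequency [m]. *)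
Lemma grid_sum_cos_sin (M m : nat) : (0 < m < M)%nat ->
  grid_sum M (fun t => cos (INR m * t)) = 0 /\ grid_sum M (fun t => sin (INR m * t)) = 0.
Proof.
  intros Hm. set (x := 2 * PI * INR m / INR M). unfold grid_sum.
  assert (HM : 0 < INR M) by (apply lt_0_INR; lia).
  assert (Hx : forall j, INR m * grid M j = INR j * x) by (intro j; unfold grid, x; field; lra).
  assert (Hs : sin (x / 2) <> 0).
  { replace (x / 2) with (PI * INR m / INR M) by (unfold x; field; lra).
    apply sin_pi_frac_neq0; auto. }
  assert (HMx : INR M * x - x / 2 = - (x / 2) + 2 * INR m * PI) by (unfold x; field; lra).
  assert (Hshift : forall j, (INR (S j) * x - x / 2) = INR j * x + x / 2)
    by (intro j; rewrite S_INR, Rmult_plus_distr_r; lra).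
  split; apply Rmult_eq_reg_l with (2 * sin (x / 2)); try lra; rewrite Rmult_0_r, <- sum_lt_scal.
  - rewrite (sum_lt_ext _ (fun j => sin (INR (S j) * x - x / 2) - sin (INR j * x - x / 2))).
    + rewrite (sum_lt_telescope (fun j => sin (INR j * x - x / 2))), HMx, sin_period.
      simpl INR. rewrite Rmult_0_l, Rminus_0_l. lra.
    + intros j _. rewrite Hx, Hshift, sin_plus, sin_minus. ring.
  - rewrite (sum_lt_ext _ (fun j => -1 * (cos (INR (S j) * x - x / 2) - cos (INR j * x - x / 2)))).
    + rewrite sum_lt_scal, (sum_lt_telescope (fun j => cos (INR j * x - x / 2))), HMx, cos_period.
      simpl INR. rewrite Rmult_0_l, Rminus_0_l. lra.
    + intros j _. rewrite Hx, Hshift, cos_plus, cos_minus. ring.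
Qed.

Lemma grid_sum_trig M m a b : (0 < Z.abs m < Z.of_nat M)%Z -> grid_sum M (trig m a b) = 0.
Proof.
  intros Hm.
  assert (Hnat : forall k a b, (0 < k < M)%nat -> grid_sum M (trig (Z.of_nat k) a b) = 0).
  { intros k a' b' Hk. destruct (grid_sum_cos_sin M k Hk) as [Hc Hs]. unfold grid_sum, trig in *.
    rewrite (sum_lt_ext _ (fun j => a' * cos (INR k * grid M j) + (- b') * sin (INR k * grid M j)))
      by (intros; rewrite <- INR_IZR_INZ; ring).
    rewrite sum_lt_add, !sum_lt_scal, Hc, Hs. ring. }
  destruct (Z_lt_le_dec m 0).
  - replace m with (- Z.of_nat (Z.to_nat (- m)))%Z by lia.
    rewrite (grid_sum_ext _ _ (trig (Z.of_nat (Z.to_nat (- m))) a (- b))) by (intros; apply trig_opp).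
    apply Hnat. lia.
  - replace m with (Z.of_nat (Z.to_nat m)) by lia. apply Hnat. lia.
Qed.

(** * Riesz products *)

Lemma cmod_nonneg x y : 0 <= cmod x y.
Proof. apply sqrt_pos. Qed.

Lemma cmod_sqr x y : cmod x y * cmod x y = x * x + y * y.
Proof. apply sqrt_sqrt. nra. Qed.

Lemma cmod_eq0 x y : cmod x y = 0 -> x = 0 /\ y = 0.
Proof. intros H. pose proof (cmod_sqr x y) as E. rewrite H in E. split; nra. Qed.

Lemma cmod_le_abs x y : cmod x y <= Rabs x + Rabs y.
Proof.
  unfold cmod. pose proof (Rabs_pos x). pose proof (Rabs_pos y).
  rewrite <- (sqrt_square (Rabs x + Rabs y)) by lra. apply sqrt_le_1_alt.
  assert (x * x = Rabs x * Rabs x) by (rewrite <- Rabs_mult, Rabs_right; nra).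
  assert (y * y = Rabs y * Rabs y) by (rewrite <- Rabs_mult, Rabs_right; nra).
  nra.
Qed.

Lemma cmod_scale_dot x y c : (c * x) * (x / cmod x y) + (c * y) * (y / cmod x y) = c * cmod x y.
Proof.
  destruct (Req_dec (cmod x y) 0) as [E|E].
  - destruct (cmod_eq0 _ _ E) as [-> ->]. rewrite E. unfold Rdiv. ring.
  - transitivity (c * (x * x + y * y) / cmod x y); [field; auto|].
    rewrite <- cmod_sqr. field. auto.
Qed.

Lemma cmod_normalize_sqr_le1 x y : (x / cmod x y) * (x / cmod x y) + (y / cmod x y) * (y / cmod x y) <= 1.
Proof.
  pose proof (cmod_scale_dot x y (/ cmod x y)) as E.
  destruct (Req_dec (cmod x y) 0) as [Z|Z].
  - destruct (cmod_eq0 _ _ Z) as [-> ->]. unfold Rdiv. lra.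
  - replace (x / cmod x y * (x / cmod x y) + y / cmod x y * (y / cmod x y))
      with (/ cmod x y * x * (x / cmod x y) + / cmod x y * y * (y / cmod x y)) by (field; auto).
    rewrite E, Rinv_l by auto. lra.
Qed.

Lemma trig_abs_le m a b t : Rabs (trig m a b t) <= cmod a b.
Proof.
  unfold trig, cmod. set (c := cos (IZR m * t)). set (s := sin (IZR m * t)).
  assert (Hcs : s * s + c * c = 1) by (pose proof (sin2_cos2 (IZR m * t)) as H; unfold Rsqr in H; auto).
  rewrite <- sqrt_Rsqr_abs. apply sqrt_le_1_alt. unfold Rsqr.
  pose proof (Rle_0_sqr (a * s + b * c)). unfold Rsqr in *. nra.
Qed.

Lemma re_term_trig n ar ai r t k :
  re_term n ar ai r t k = trig (Z.of_nat (n k)) (r ^ n k * ar k) (r ^ n k * ai k) t.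
Proof. unfold re_term, trig. rewrite <- INR_IZR_INZ. ring. Qed.

Lemma re_term_abs_le n ar ai r t k : 0 <= r ->
  Rabs (re_term n ar ai r t k) <= cmod (ar k) (ai k) * r ^ n k.
Proof.
  intros Hr. unfold re_term. rewrite Rabs_mult, (Rabs_right (r ^ n k)) by (apply Rle_ge, pow_le; auto).
  rewrite Rmult_comm. apply Rmult_le_compat_r; [apply pow_le; auto|].
  pose proof (trig_abs_le (Z.of_nat (n k)) (ar k) (ai k) t) as H.
  unfold trig in H. rewrite <- INR_IZR_INZ in H. exact H.
Qed.

Section RieszProducts.

Variables (n : nat -> nat) (ar ai : nat -> R).

Definition riesz_factor (k : nat) (t : R) : R :=
  trig (Z.of_nat (n k)) (ar k / cmod (ar k) (ai k)) (ai k / cmod (ar k) (ai k)) t.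

(* [riesz F t = prod_(k in F) (1 + cos (n_k t + arg a_k))]. *)
Fixpoint riesz (F : list nat) (t : R) : R :=
  match F with nil => 1 | k :: F' => (1 + riesz_factor k t) * riesz F' t end.

Fixpoint freq_sum (F : list nat) : nat :=
  match F with nil => O | k :: F' => (n k + freq_sum F')%nat end.

(* The frequencies [sum_(k in F) e_k n_k], [e_k in {-1, 0, 1}], occurring in [riesz F]. *)
Fixpoint spectrum (F : list nat) (s : Z) : Prop :=
  match F with
  | nil => s = 0%Z
  | k :: F' => spectrum F' s \/ spectrum F' (s - Z.of_nat (n k))%Z
               \/ spectrum F' (s + Z.of_nat (n k))%Z
  end.

Fixpoint lacunary (Q : R) (F : list nat) : Prop :=
  match F with
  | nil => True
  | k :: F' => lacunary Q F' /\ (Q - 1) * INR (freq_sum F') <= INR (n k)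
  end.

Lemma riesz_factor_abs_le1 k t : Rabs (riesz_factor k t) <= 1.
Proof.
  eapply Rle_trans; [apply trig_abs_le|].
  rewrite <- sqrt_1. apply sqrt_le_1_alt, cmod_normalize_sqr_le1.
Qed.

Lemma riesz_nonneg F t : 0 <= riesz F t.
Proof.
  induction F as [|k F IH]; simpl; [lra|]. apply Rmult_le_pos; auto.
  pose proof (riesz_factor_abs_le1 k t) as H.
  pose proof (Rle_abs (- riesz_factor k t)). rewrite Rabs_Ropp in *. lra.
Qed.

Lemma grid_sum_riesz_cons k F M m a b :
  let c := ar k / cmod (ar k) (ai k) in let d := ai k / cmod (ar k) (ai k) in
  grid_sum M (fun t => riesz (k :: F) t * trig m a b t) =
  grid_sum M (fun t => riesz F t * trig m a b t)
  + / 2 * grid_sum M (fun t => riesz F t * trig (m + Z.of_nat (n k)) (a * c - b * d) (a * d + b * c) t)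
  + / 2 * grid_sum M (fun t => riesz F t * trig (m - Z.of_nat (n k)) (a * c + b * d) (b * c - a * d) t).
Proof.
  intros c d. unfold grid_sum. rewrite <- !sum_lt_scal, <- !sum_lt_add.
  apply sum_lt_ext. intros j _. simpl riesz. unfold riesz_factor. fold c d.
  set (t := grid M j).
  transitivity (riesz F t * trig m a b t + riesz F t * (trig m a b t * trig (Z.of_nat (n k)) c d t));
    [ring|].
  rewrite trig_mul. ring.
Qed.

Lemma spectrum_abs_le F s : spectrum F s -> (Z.abs s <= Z.of_nat (freq_sum F))%Z.
Proof.
  revert s; induction F as [|k F IH]; simpl; intros s H.
  - subst. simpl. lia.
  - destruct H as [H|[H|H]]; apply IH in H; lia.
Qed.

Lemma freq_le_freq_sum F k : In k F -> (n k <= freq_sum F)%nat.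
Proof.
  induction F as [|t F IH]; simpl; intros H; [contradiction|].
  destruct H as [->|H]; [lia|]. apply IH in H. lia.
Qed.

(* The bound on [M] rules out aliasing on the grid. *)
Lemma grid_sum_riesz_off_spectrum M F : forall m a b,
  (Z.abs m + Z.of_nat (freq_sum F) < Z.of_nat M)%Z -> ~ spectrum F m ->
  grid_sum M (fun t => riesz F t * trig m a b t) = 0.
Proof.
  induction F as [|k F IH]; intros m a b Hm Hs.
  - rewrite (grid_sum_ext _ _ (trig m a b)) by (intros; simpl; ring).
    apply grid_sum_trig. simpl in Hm, Hs. lia.
  - rewrite grid_sum_riesz_cons. simpl in Hm, Hs. rewrite !IH by (lia || tauto). ring.
Qed.

Lemma spectrum_near_freq Q F s : 1 <= Q -> lacunary Q F -> spectrum F s -> s <> 0%Z ->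
  exists i, In i F /\ (Q - 1) * Rabs (IZR (Z.abs s) - INR (n i)) <= INR (n i).
Proof.
  intros HQ. revert s; induction F as [|k F IH]; simpl; intros s HL H Hs; [contradiction|].
  destruct HL as [HL HB].
  assert (Hk : forall s', spectrum F s' -> (Z.abs (Z.abs s - Z.of_nat (n k)) <= Z.abs s')%Z ->
      exists i, (k = i \/ In i F) /\ (Q - 1) * Rabs (IZR (Z.abs s) - INR (n i)) <= INR (n i)).
  { intros s' H1 H2. exists k; split; auto. apply spectrum_abs_le in H1.
    apply Rle_trans with ((Q - 1) * INR (freq_sum F)); auto.
    apply Rmult_le_compat_l; [lra|].
    rewrite (INR_IZR_INZ (n k)), <- minus_IZR, <- abs_IZR, INR_IZR_INZ. apply IZR_le. lia. }
  destruct H as [H|[H|H]].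
  - destruct (IH s HL H Hs) as [i [Hi1 Hi2]]. exists i. auto.
  - apply (Hk _ H). lia.
  - apply (Hk _ H). lia.
Qed.

Variable Q : R.
Hypothesis Q_gt3 : 3 < Q.
Hypothesis n_pos : forall k, (0 < n k)%nat.

Lemma lacunary_head k F : lacunary Q (k :: F) -> (2 * freq_sum F < n k)%nat.
Proof.
  simpl; intros [_ H]. apply INR_lt. rewrite !plus_INR. simpl (INR 0).
  assert (0 < INR (n k)) by (apply lt_0_INR; auto).
  assert (0 <= INR (freq_sum F)) by apply pos_INR.
  destruct (Req_dec (INR (freq_sum F)) 0) as [E|E]; [rewrite E; lra|]. nra.
Qed.

Lemma lacunary_NoDup F : lacunary Q F -> NoDup F.
Proof.
  induction F as [|t F IH]; intros HL; constructor.
  - intro HI. pose proof (lacunary_head _ _ HL). pose proof (freq_le_freq_sum F t HI). lia.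
  - apply IH, HL.
Qed.

Lemma grid_sum_riesz M F : lacunary Q F -> (freq_sum F < M)%nat ->
  grid_sum M (riesz F) = INR M.
Proof.
  induction F as [|k F IH]; intros HL HM.
  - unfold grid_sum. simpl. rewrite sum_lt_const. ring.
  - pose proof (lacunary_head _ _ HL) as HB. destruct HL as [HL _]. simpl in HM.
    transitivity (grid_sum M (riesz F) + grid_sum M (fun t => riesz F t * riesz_factor k t)).
    + unfold grid_sum. rewrite <- sum_lt_add. apply sum_lt_ext. intros. simpl. ring.
    + unfold riesz_factor. rewrite IH, grid_sum_riesz_off_spectrum by
        (auto || lia || (intro Hs; apply spectrum_abs_le in Hs; lia)). ring.
Qed.

Lemma grid_sum_riesz_trig0 M F a b : lacunary Q F -> (freq_sum F < M)%nat ->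
  grid_sum M (fun t => riesz F t * trig 0 a b t) = INR M * a.
Proof.
  intros HL HM. rewrite <- (grid_sum_riesz M F HL HM). unfold grid_sum.
  rewrite Rmult_comm, <- sum_lt_scal. apply sum_lt_ext. intros. rewrite trig0. ring.
Qed.

Lemma grid_sum_riesz_freq M F k a b : lacunary Q F -> In k F -> (n k + freq_sum F < M)%nat ->
  grid_sum M (fun t => riesz F t * trig (Z.of_nat (n k)) a b t) =
  INR M / 2 * (a * (ar k / cmod (ar k) (ai k)) + b * (ai k / cmod (ar k) (ai k))).
Proof.
  induction F as [|t F IH]; intros HL Hk HM; [contradiction|].
  pose proof (lacunary_head _ _ HL) as HB. destruct HL as [HL _]. simpl in HM.
  assert (Hoff : forall m a' b', (Z.abs m <= Z.of_nat (n k) + Z.of_nat (n t))%Z ->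
            ~ spectrum F m -> grid_sum M (fun t => riesz F t * trig m a' b' t) = 0).
  { intros. apply grid_sum_riesz_off_spectrum; auto. destruct Hk as [<-|Hk]; [lia|].
    pose proof (freq_le_freq_sum F k Hk). lia. }
  rewrite grid_sum_riesz_cons.
  destruct (Nat.eq_dec k t) as [<-|E].
  - rewrite Z.sub_diag, grid_sum_riesz_trig0, !Hoff
      by (auto || lia || (intro Hs; apply spectrum_abs_le in Hs; lia)).
    unfold Rdiv. ring.
  - destruct Hk as [Hk|Hk]; [congruence|].
    pose proof (freq_le_freq_sum F k Hk).
    rewrite IH, !Hoff by (auto || lia || (intro Hs; apply spectrum_abs_le in Hs; lia)). ring.
Qed.

End RieszProducts.

(** * Necessity of the coefficient bound *)

(* Convergence at the larger radius [(1 + r) / 2] makes [|a_k| r^(n_k)] geometrically small. *)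
Lemma coef_geometric_bound n ar ai r : converges_in_disk n ar ai -> (forall k, (k <= n k)%nat) ->
  0 <= r < 1 -> exists q N, 0 <= q < 1 /\
    forall k, (N <= k)%nat -> cmod (ar k) (ai k) * r ^ n k <= 2 * q ^ k.
Proof.
  intros Hc Hkn Hr. set (r' := (1 + r) / 2). set (q := r / r').
  assert (Hq : 0 <= q < 1).
  { unfold q, r'. split; [apply Rmult_le_pos; [lra|left; apply Rinv_0_lt_compat; lra]|].
    apply Rmult_lt_reg_r with ((1 + r) / 2); [lra|]. unfold Rdiv. rewrite Rmult_assoc, Rinv_l; lra. }
  assert (Erq : r = q * r') by (unfold q, r'; field; lra).
  destruct (Hc r' 0 ltac:(unfold r'; lra)) as [[l1 H1] [l2 H2]].
  destruct (series_terms_eventually_le1 _ _ H1) as [N1 HN1].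
  destruct (series_terms_eventually_le1 _ _ H2) as [N2 HN2].
  exists q, (Nat.max N1 N2). split; auto. intros k Hk.
  pose proof (HN1 k ltac:(lia)) as A1. pose proof (HN2 k ltac:(lia)) as A2.
  unfold re_term, im_term in A1, A2. rewrite Rmult_0_r, cos_0, sin_0 in A1, A2.
  assert (Hpos : 0 <= r' ^ n k) by (apply pow_le; unfold r'; lra).
  replace (ar k * 1 - ai k * 0) with (ar k) in A1 by ring.
  replace (ar k * 0 + ai k * 1) with (ai k) in A2 by ring.
  rewrite Rabs_mult, (Rabs_right (r' ^ n k)) in A1, A2 by lra.
  rewrite Erq, Rpow_mult_distr.
  pose proof (cmod_le_abs (ar k) (ai k)). pose proof (cmod_nonneg (ar k) (ai k)).
  pose proof (pow_le q (n k) (proj1 Hq)). pose proof (pow_le1_antimono q k (n k) ltac:(lra) (Hkn k)).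
  apply Rle_trans with ((Rabs (ar k) + Rabs (ai k)) * r' ^ n k * q ^ n k).
  - rewrite Rmult_assoc, (Rmult_comm (q ^ n k)). apply Rmult_le_compat_r; nra.
  - nra.
Qed.

Lemma re_partial_sum_uniform n ar ai r eps : converges_in_disk n ar ai ->
  (forall k, (k <= n k)%nat) -> 0 <= r < 1 -> 0 < eps ->
  exists k0, forall k, (k0 <= k)%nat -> forall t l, u_value n ar ai r t l ->
    Rabs (l - sum_f_R0 (re_term n ar ai r t) k) <= eps.
Proof.
  intros Hc Hkn Hr He.
  destruct (coef_geometric_bound n ar ai r Hc Hkn Hr) as [q [N [Hq Hgeom]]].
  destruct (geometric_tail_small q eps Hq He) as [k0 Hk0].
  exists (Nat.max N k0). intros k Hk t l Hl. apply Un_cv_sum_f_R0_tail; auto. intro p.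
  eapply Rle_trans; [apply sum_lt_abs|]. eapply Rle_trans; [|apply (Hk0 k); lia].
  apply sum_lt_le. intros i _. eapply Rle_trans; [apply re_term_abs_le; lra|]. apply Hgeom. lia.
Qed.

Section RieszEstimate.

Variables (n : nat -> nat) (ar ai : nat -> R) (Q : R).
Hypothesis conv : converges_in_disk n ar ai.
Hypothesis Q_gt3 : 3 < Q.
Hypothesis n_pos : forall k, (0 < n k)%nat.
Hypothesis n_ge : forall k, (k <= n k)%nat.
Hypothesis n_mono : forall i k, (i <= k)%nat -> (n i <= n k)%nat.
Hypothesis n_separated : forall i k, i <> k -> INR (n i) < (Q - 1) * Rabs (INR (n k) - INR (n i)).

(* Separation keeps every [n_k] with [k] outside [F] off the spectrum of [riesz F], so pairing
   picks out exactly the terms indexed by [F]. *)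
Lemma grid_sum_riesz_re_partial_sum r F k0 : lacunary n Q F -> (freq_sum n F <= k0)%nat ->
  let M := (n k0 + freq_sum n F + 1)%nat in
  grid_sum M (fun t => riesz n ar ai F t * sum_f_R0 (re_term n ar ai r t) k0)
  = INR M / 2 * sum_list (fun k => cmod (ar k) (ai k) * r ^ n k) F.
Proof.
  intros HL Hk0 M. unfold grid_sum.
  rewrite (sum_lt_ext _ (fun j => sum_lt (fun k => riesz n ar ai F (grid M j)
                                   * re_term n ar ai r (grid M j) k) (S k0)))
    by (intros; rewrite sum_f_R0_sum_lt, <- sum_lt_scal; reflexivity).
  rewrite sum_lt_swap, <- sum_list_scal, <- (sum_lt_indicator _ F (S k0)).
  - apply sum_lt_ext. intros k Hk. fold (grid_sum M (fun t => riesz n ar ai F t * re_term n ar ai r t k)).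
    rewrite (grid_sum_ext _ _ (fun t => riesz n ar ai F t
               * trig (Z.of_nat (n k)) (r ^ n k * ar k) (r ^ n k * ai k) t))
      by (intros; rewrite re_term_trig; auto).
    pose proof (n_mono k k0 ltac:(lia)).
    destruct (in_dec Nat.eq_dec k F) as [I|I].
    + rewrite (grid_sum_riesz_freq n ar ai Q) by (auto || unfold M; lia). rewrite cmod_scale_dot. ring.
    + apply grid_sum_riesz_off_spectrum; [unfold M; lia|]. intro HS.
      destruct (spectrum_near_freq n Q F _ ltac:(lra) HL HS) as [i [Hi1 Hi2]]; [pose proof (n_pos k); lia|].
      assert (i <> k) by congruence.
      pose proof (n_separated i k H0). rewrite Z.abs_eq, <- INR_IZR_INZ in Hi2 by lia. lra.
  - apply (lacunary_NoDup n Q); auto.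
  - intros k Hk. pose proof (freq_le_freq_sum n F k Hk). pose proof (n_ge k). lia.
Qed.

(* Pairing [u] against the nonnegative Riesz product of mean 1. *)
Lemma riesz_coef_sum_le r C F : 0 <= r < 1 -> (forall t l, u_value n ar ai r t l -> l <= C) ->
  lacunary n Q F -> sum_list (fun k => cmod (ar k) (ai k) * r ^ n k) F <= 2 * C.
Proof.
  intros Hr Hu HL. set (S0 := sum_list (fun k => cmod (ar k) (ai k) * r ^ n k) F).
  cut (S0 / 2 <= C); [lra|]. apply le_epsilon. intros eps He.
  destruct (re_partial_sum_uniform n ar ai r eps conv n_ge Hr He) as [k1 Hk1].
  set (k0 := Nat.max k1 (freq_sum n F)). set (M := (n k0 + freq_sum n F + 1)%nat).
  assert (HM : 0 < INR M) by (apply lt_0_INR; unfold M; lia).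
  assert (Hpartial : forall t, sum_f_R0 (re_term n ar ai r t) k0 <= C + eps).
  { intro t. destruct (conv r t Hr) as [[l Hl] _].
    pose proof (Hu t l Hl). pose proof (Hk1 k0 ltac:(unfold k0; lia) t l Hl) as Hclose.
    pose proof (Rle_abs (sum_f_R0 (re_term n ar ai r t) k0 - l)) as Habs.
    rewrite Rabs_minus_sym in Habs. lra. }
  assert (Hpair : INR M / 2 * S0 <= INR M * (C + eps)).
  { unfold S0, M. rewrite <- (grid_sum_riesz_re_partial_sum r F k0 HL ltac:(unfold k0; lia)). fold M.
    rewrite <- (grid_sum_riesz_trig0 n ar ai Q Q_gt3 n_pos M F (C + eps) 0 HL ltac:(lia)).
    apply grid_sum_le. intro t. rewrite trig0.
    apply Rmult_le_compat_l; [apply riesz_nonneg|auto]. }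
  apply Rmult_le_reg_l with (INR M); lra.
Qed.

End RieszEstimate.

Fixpoint progression (c s I : nat) : list nat :=
  match I with O => c :: nil | S I' => (c + s * I)%nat :: progression c s I' end.

Lemma sum_list_progression f c s I :
  sum_list f (progression c s I) = sum_lt (fun i => f (c + s * i)%nat) (S I).
Proof.
  induction I as [|I IH]; simpl; [rewrite Nat.mul_0_r, Nat.add_0_r; ring|].
  simpl in IH. rewrite IH. ring.
Qed.

Lemma progression_lacunary n Q c s I : 1 < Q -> (forall k, INR (n (k + s)%nat) >= Q * INR (n k)) ->
  lacunary n Q (progression c s I)
  /\ INR (freq_sum n (progression c s I)) * (Q - 1) <= Q * INR (n (c + s * I)%nat).
Proof.
  intros HQ Hs. induction I as [|I [IH1 IH2]].
  - simpl. rewrite Nat.mul_0_r, !Nat.add_0_r. pose proof (pos_INR (n c)).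
    split; [split; [exact I|simpl; lra]|nra].
  - simpl progression. simpl freq_sum.
    pose proof (Hs (c + s * I)%nat) as H. replace (c + s * I + s)%nat with (c + s * S I)%nat in H by lia.
    split; [split; auto; lra|]. rewrite plus_INR. pose proof (pos_INR (n (c + s * S I)%nat)). nra.
Qed.

Section HadamardGaps.

Variables (n : nat -> nat) (lam : R).
Hypothesis lam_gt1 : 1 < lam.
Hypothesis n_pos : forall k, (0 < n k)%nat.
Hypothesis n_gap : forall k, INR (n (S k)) >= lam * INR (n k).

Lemma hadamard_lt_succ k : (n k < n (S k))%nat.
Proof. apply INR_lt. pose proof (n_gap k). assert (0 < INR (n k)) by (apply lt_0_INR; auto). nra. Qed.

Lemma hadamard_mono i k : (i <= k)%nat -> (n i <= n k)%nat.
Proof. intros Hik. induction Hik as [|k _ IH]; auto. pose proof (hadamard_lt_succ k). lia. Qed.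

Lemma hadamard_gt_index k : (k < n k)%nat.
Proof. induction k as [|k IH]; [apply n_pos|]. pose proof (hadamard_lt_succ k). lia. Qed.

Lemma hadamard_pow i j : INR (n (i + j)%nat) >= lam ^ j * INR (n i).
Proof.
  induction j as [|j IH]; simpl; [rewrite Nat.add_0_r; lra|].
  rewrite Nat.add_succ_r. pose proof (n_gap (i + j)%nat). pose proof (pos_INR (n i)).
  pose proof (pow_le lam j ltac:(lra)). nra.
Qed.

Lemma hadamard_lt i k : (i < k)%nat -> INR (n k) >= lam * INR (n i).
Proof.
  intros Hik. pose proof (le_INR _ _ (hadamard_mono (S i) k Hik)). pose proof (n_gap i). lra.
Qed.

Lemma hadamard_separated Q : lam / (lam - 1) < Q - 1 ->
  forall i k, i <> k -> INR (n i) < (Q - 1) * Rabs (INR (n k) - INR (n i)).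
Proof.
  intros HQ i k Hik.
  assert (HX : lam < (Q - 1) * (lam - 1)).
  { apply Rmult_lt_compat_r with (r := lam - 1) in HQ; [|lra].
    unfold Rdiv in HQ. rewrite Rmult_assoc, Rinv_l in HQ by lra. lra. }
  assert (HQ1 : 0 < Q - 1) by (apply Rle_lt_trans with (lam / (lam - 1)); auto;
                               left; apply Rdiv_lt_0_compat; lra).
  assert (0 < INR (n i)) by (apply lt_0_INR; auto). assert (0 <= INR (n k)) by apply pos_INR.
  destruct (Nat.lt_gt_cases i k) as [[Hlt|Hgt] _]; [exact Hik| |].
  - pose proof (hadamard_lt i k Hlt). rewrite Rabs_right by nra.
    assert ((Q - 1) * ((lam - 1) * INR (n i)) <= (Q - 1) * (INR (n k) - INR (n i)))
      by (apply Rmult_le_compat_l; lra).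
    nra.
  - pose proof (hadamard_lt k i Hgt). rewrite Rabs_left1 by nra.
    assert ((Q - 1) * ((lam - 1) * INR (n i)) <= (Q - 1) * (lam * - (INR (n k) - INR (n i))))
      by (apply Rmult_le_compat_l; nra).
    apply Rmult_lt_reg_l with lam; nra.
Qed.

End HadamardGaps.

(* Splitting the indices into [s] residue classes, with [lam ^ s >= Q], makes each class lacunary. *)
Lemma abel_coef_sum_le n ar ai lam : 1 < lam -> (forall k, (0 < n k)%nat) ->
  (forall k, INR (n (S k)) >= lam * INR (n k)) -> converges_in_disk n ar ai ->
  exists s, (0 < s)%nat /\ forall r C m, 0 <= r < 1 -> (forall t l, u_value n ar ai r t l -> l <= C) ->
    sum_lt (fun k => cmod (ar k) (ai k) * r ^ n k) (s * S m) <= INR s * (2 * C).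
Proof.
  intros Hl Hn Hgap Hc. set (Q := 4 + lam / (lam - 1)).
  assert (Hfrac : 0 < lam / (lam - 1)) by (apply Rdiv_lt_0_compat; lra).
  destruct (pow_unbounded lam Q Hl) as [s [Hs HQs]]. exists s. split; auto.
  intros r C m Hr Hu.
  rewrite sum_lt_blocks, <- sum_lt_const. apply sum_lt_le. intros c _.
  rewrite <- (sum_list_progression (fun k => cmod (ar k) (ai k) * r ^ n k)).
  apply (riesz_coef_sum_le n ar ai Q); auto.
  - unfold Q. lra.
  - intro k. pose proof (hadamard_gt_index n lam Hl Hn Hgap k). lia.
  - apply (hadamard_mono n lam Hl Hn Hgap).
  - apply (hadamard_separated n lam Hl Hn Hgap). unfold Q. lra.
  - apply (progression_lacunary n Q c s m); [unfold Q; lra|]. intro k.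
    pose proof (hadamard_pow n lam Hl Hgap k s). pose proof (pos_INR (n k)). nra.
Qed.

Lemma coef_sum_le_abel n ar ai r N L : 0 <= r <= 1 -> / 2 <= r ^ N -> (S N <= L)%nat ->
  coef_sum n ar ai N <= 2 * sum_lt (fun k => cmod (ar k) (ai k) * r ^ n k) L.
Proof.
  intros Hr HrN HL. unfold coef_sum. rewrite sum_f_R0_sum_lt, <- sum_lt_scal.
  assert (Hnonneg : forall k, 0 <= 2 * (cmod (ar k) (ai k) * r ^ n k)).
  { intro k. pose proof (cmod_nonneg (ar k) (ai k)). pose proof (pow_le r (n k) (proj1 Hr)). nra. }
  apply Rle_trans with (sum_lt (fun k => 2 * (cmod (ar k) (ai k) * r ^ n k)) (S N)).
  - apply sum_lt_le. intros k _. pose proof (Hnonneg k). pose proof (cmod_nonneg (ar k) (ai k)).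
    destruct (Nat.leb_spec (n k) N) as [Hle|Hgt]; [|lra].
    pose proof (pow_le1_antimono r (n k) N Hr Hle). nra.
  - apply sum_lt_mono; auto.
Qed.

Lemma g_double v D x : doubling v D -> 1 <= x -> g v (2 * x) <= D * g v x.
Proof.
  intros [_ Hd] Hx. unfold g. replace (1 - / x) with (1 - 2 * / (2 * x)) by (field; lra).
  apply Hd. split; [apply Rinv_0_lt_compat; lra|apply Rinv_le_contravar; lra].
Qed.

Lemma kv_coef_sum_bound v D lam n ar ai :
  standing v -> doubling v D -> 1 < lam -> (forall k, (0 < n k)%nat) ->
  (forall k, INR (n (S k)) >= lam * INR (n k)) -> converges_in_disk n ar ai ->
  in_kv v n ar ai ->
  exists gamma, gamma > 0 /\ forall N : nat, (1 <= N)%nat -> coef_sum n ar ai N <= gamma * g v (INR N).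
Proof.
  intros [Hv1 _] Hd Hl Hn Hgap Hc [K [HK Hkv]].
  destruct (abel_coef_sum_le n ar ai lam Hl Hn Hgap Hc) as [s [Hs Habel]].
  assert (HsR : 0 < INR s) by (apply lt_0_INR; auto).
  exists (4 * INR s * K * D). split; [destruct Hd; apply Rmult_lt_0_compat; nra|].
  intros N HN. assert (HNR : 1 <= INR N) by (apply (le_INR 1); auto).
  set (r := 1 - / (2 * INR N)).
  assert (Hr : 0 <= r < 1).
  { unfold r. assert (0 < / (2 * INR N) <= / 2) by
      (split; [apply Rinv_0_lt_compat|apply Rinv_le_contravar]; lra). lra. }
  pose proof (Habel r (K * v r) N Hr (fun t l => Hkv r t l Hr)) as Habs.
  pose proof (coef_sum_le_abel n ar ai r N (s * S N) ltac:(lra)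
                (one_sub_inv_pow_ge_half N HN) ltac:(nia)) as Hcoef.
  pose proof (g_double v D (INR N) Hd HNR) as Hvg. unfold g at 1 in Hvg.
  fold r in Hvg.
  pose proof (Hv1 r Hr). apply Rle_trans with (2 * (INR s * (2 * (K * v r)))); [lra|].
  replace (4 * INR s * K * D * g v (INR N)) with (4 * INR s * K * (D * g v (INR N))) by ring.
  assert (K * v r <= K * (D * g v (INR N))) by (apply Rmult_le_compat_l; lra). nra.
Qed.

(** * Sufficiency of the coefficient bound *)

(* Super-geometric decay, so that [sum_j D ^ (j + 1) * dyadic_weight j] converges for every [D]. *)
Definition dyadic_weight (j : nat) : R :=
  match j with O => 1 | S j' => (/ 2) ^ (2 ^ j') end.

Lemma dyadic_weight_nonneg j : 0 <= dyadic_weight j.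
Proof. destruct j; simpl; [lra|]. apply pow_le. lra. Qed.

Lemma dyadic_weight_series_bounded D : 1 <= D ->
  exists C, 0 < C /\ forall J, sum_lt (fun j => D ^ S j * dyadic_weight j) J <= C.
Proof.
  intros HD.
  destruct (pow_lt_1_zero (/ 2) ltac:(rewrite Rabs_right; lra) (/ (2 * D))) as [N HN].
  { apply Rinv_0_lt_compat. lra. }
  set (b := fun j => D ^ S j * dyadic_weight j).
  assert (Hb : forall j, 0 <= b j) by
    (intro; unfold b; apply Rmult_le_pos; [apply pow_le; lra|apply dyadic_weight_nonneg]).
  exists (sum_lt b (S N) + 2 * b (S N) + 1). split.
  { pose proof (sum_lt_nonneg b (S N) Hb). pose proof (Hb (S N)). lra. }
  intro J. cut (sum_lt b J <= sum_lt b (S N) + 2 * b (S N)); [lra|].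
  apply sum_lt_ratio_bound; auto. intros [|j] Hj; [lia|]. unfold b.
  change (dyadic_weight (S (S j))) with ((/ 2) ^ (2 ^ S j)).
  change (dyadic_weight (S j)) with ((/ 2) ^ (2 ^ j)).
  replace (2 ^ S j)%nat with (2 ^ j + 2 ^ j)%nat by (simpl; lia). rewrite pow_add.
  set (x := (/ 2) ^ (2 ^ j)).
  assert (Hx : x <= / (2 * D)).
  { pose proof (HN (2 ^ j)%nat ltac:(pose proof (pow2_gt j); lia)) as H.
    rewrite Rabs_right in H by (apply Rle_ge, pow_le; lra). unfold x. lra. }
  assert (0 <= x) by (apply pow_le; lra).
  assert (D * x <= / 2) by (replace (/ 2) with (D * / (2 * D)) by (field; lra);
                             apply Rmult_le_compat_l; lra).
  change (D ^ S (S (S j))) with (D * D ^ S (S j)).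
  assert (0 <= D ^ S (S j)) by (apply pow_le; lra).
  set (a := D ^ S (S j)) in *.
  assert (0 <= a * x * (/ 2 - D * x)) by (apply Rmult_le_pos; [apply Rmult_le_pos|]; lra).
  unfold Rdiv. nra.
Qed.

Lemma g_pow2 v D x j : doubling v D -> 1 <= x -> g v (2 ^ j * x) <= D ^ j * g v x.
Proof.
  intros Hd Hx. induction j as [|j IH]; simpl; [rewrite Rmult_1_l; lra|].
  assert (1 <= 2 ^ j) by (apply pow_R1_Rle; lra).
  rewrite Rmult_assoc. eapply Rle_trans; [apply (g_double v D); auto; nra|].
  destruct Hd as [HD _]. rewrite Rmult_assoc. apply Rmult_le_compat_l; lra.
Qed.

Lemma standing_mono v x y : standing v -> 0 <= x -> x <= y -> y < 1 -> v x <= v y.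
Proof.
  intros [_ [Hv _]] Hx Hxy Hy. destruct (Req_dec x y) as [->|E]; [lra|]. left. apply Hv; lra.
Qed.

(* [N0] is [1 / (1 - r)] up to rounding. *)
Lemma radius_scale v r : standing v -> 0 <= r < 1 ->
  exists N0, (1 <= N0)%nat /\ g v (INR N0) <= v r /\ r ^ (2 * N0) <= / 2.
Proof.
  intros Hv Hr. set (R0 := / (1 - r)).
  assert (HR0 : 1 <= R0) by (unfold R0; rewrite <- Rinv_1; apply Rinv_le_contravar; lra).
  assert (Er : r = 1 - / R0) by (unfold R0; rewrite Rinv_inv; ring).
  destruct (archimed R0) as [Hu1 Hu2].
  assert (Hz : (1 < up R0)%Z) by (apply lt_IZR; lra).
  exists (Z.to_nat (up R0 - 1)).
  assert (EN0 : INR (Z.to_nat (up R0 - 1)) = IZR (up R0) - 1)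
    by (rewrite INR_IZR_INZ, Z2Nat.id, minus_IZR by lia; auto).
  set (N0 := Z.to_nat (up R0 - 1)) in *.
  assert (2 <= IZR (up R0)) by (apply IZR_le; lia).
  assert (HN0 : 1 <= INR N0) by lra.
  assert (HN0n : (1 <= N0)%nat) by (apply INR_le; simpl; lra).
  split; [exact HN0n|]. split.
  - unfold g. rewrite Er. apply standing_mono; auto.
    + assert (/ INR N0 <= 1) by (rewrite <- Rinv_1; apply Rinv_le_contravar; lra). lra.
    + assert (/ R0 <= / INR N0) by (apply Rinv_le_contravar; lra). lra.
    + assert (0 < / R0) by (apply Rinv_0_lt_compat; lra). lra.
  - assert (Hr1 : r <= 1 - / INR (N0 + 1)).
    { rewrite plus_INR, Er. simpl (INR 1).
      assert (/ (INR N0 + 1) < / R0) by (apply Rinv_lt_contravar; nra). lra. }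
    pose proof (one_sub_inv_pow_le_half (N0 + 1) ltac:(lia)).
    assert (r ^ (N0 + 1) <= (1 - / INR (N0 + 1)) ^ (N0 + 1)) by (apply pow_incr; lra).
    pose proof (pow_le1_antimono r (N0 + 1) (2 * N0) ltac:(lra) ltac:(lia)).
    lra.
Qed.

Lemma dyadic_block N0 J x : (x <= 2 ^ S J * N0)%nat ->
  exists j, (j <= J)%nat /\ (x <= 2 ^ S j * N0)%nat /\ (j = O \/ (2 ^ j * N0 < x)%nat).
Proof.
  revert x; induction J as [|J IH]; intros x Hx; [exists O; auto|].
  destruct (le_lt_dec x (2 ^ S J * N0)) as [Hle|Hlt].
  - destruct (IH x Hle) as [j [Hj1 Hj2]]. exists j. split; [lia|auto].
  - exists (S J). auto.
Qed.

Lemma pow_le_dyadic_weight r N0 x j : 0 <= r <= 1 -> r ^ (2 * N0) <= / 2 ->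
  (j = O \/ (2 ^ j * N0 < x)%nat) -> r ^ x <= dyadic_weight j.
Proof.
  intros Hr Hhalf [->|Hx]; [apply pow_le1; auto|].
  destruct j as [|j]; [apply pow_le1; auto|]. simpl dyadic_weight.
  apply Rle_trans with (r ^ (2 ^ S j * N0)); [apply pow_le1_antimono; auto; lia|].
  replace (2 ^ S j * N0)%nat with (2 * N0 * 2 ^ j)%nat by (simpl; lia).
  rewrite pow_mult. apply pow_incr. split; [apply pow_le; lra|auto].
Qed.

Lemma pow_le_dyadic_sum r N0 x J : 0 <= r <= 1 -> r ^ (2 * N0) <= / 2 ->
  (x <= 2 ^ S J * N0)%nat ->
  r ^ x <= sum_lt (fun j => dyadic_weight j * (if Nat.leb x (2 ^ S j * N0) then 1 else 0)) (S J).
Proof.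
  intros Hr Hhalf Hx. destruct (dyadic_block N0 J x Hx) as [j [Hj1 [Hj2 Hj3]]].
  apply Rle_trans with (dyadic_weight j * (if Nat.leb x (2 ^ S j * N0) then 1 else 0)).
  - destruct (Nat.leb_spec x (2 ^ S j * N0)); [|lia].
    rewrite Rmult_1_r. apply (pow_le_dyadic_weight r N0); auto.
  - apply (sum_lt_ge_term (fun j => dyadic_weight j * (if Nat.leb x (2 ^ S j * N0) then 1 else 0)));
      [|lia].
    intro i. apply Rmult_le_pos; [apply dyadic_weight_nonneg|]. destruct (Nat.leb x _); lra.
Qed.

Lemma partial_coef_sum_le n ar ai N m : (forall k, (k < n k)%nat) ->
  sum_lt (fun k => cmod (ar k) (ai k) * (if Nat.leb (n k) N then 1 else 0)) m <= coef_sum n ar ai N.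
Proof.
  intros Hkn. unfold coef_sum. rewrite sum_f_R0_sum_lt.
  set (f := fun k => if Nat.leb (n k) N then cmod (ar k) (ai k) else 0).
  assert (Hf : forall k, 0 <= f k)
    by (intro k; unfold f; destruct (Nat.leb (n k) N); [apply cmod_nonneg|lra]).
  rewrite (sum_lt_ext _ f) by (intros k _; unfold f; destruct (Nat.leb (n k) N); ring).
  destruct (le_lt_dec m (S N)); [apply sum_lt_mono; auto|].
  replace m with (S N + (m - S N))%nat by lia. rewrite sum_lt_split, (sum_lt_eq0 (fun i => f (S N + i)%nat)); [lra|].
  intros i _. unfold f. pose proof (Hkn (S N + i)%nat).
  destruct (Nat.leb_spec (n (S N + i)%nat) N); [lia|auto].
Qed.

(* Each [r ^ n_k] is spread over the dyadic scales [2 ^ (j + 1) N0] above [n_k]. *)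
Lemma abel_sum_le_dyadic n ar ai r N0 m : (forall k, (k < n k)%nat) ->
  (forall i k, (i <= k)%nat -> (n i <= n k)%nat) -> (1 <= N0)%nat -> 0 <= r <= 1 ->
  r ^ (2 * N0) <= / 2 ->
  sum_lt (fun k => cmod (ar k) (ai k) * r ^ n k) (S m)
  <= sum_lt (fun j => dyadic_weight j * coef_sum n ar ai (2 ^ S j * N0)) (S (n m)).
Proof.
  intros Hkn Hmono HN0 Hr Hhalf.
  set (ind := fun N k => if Nat.leb (n k) N then 1 else 0).
  apply Rle_trans with (sum_lt (fun k => sum_lt (fun j =>
      dyadic_weight j * (cmod (ar k) (ai k) * ind (2 ^ S j * N0)%nat k)) (S (n m))) (S m)).
  - apply sum_lt_le. intros k Hk.
    rewrite (sum_lt_ext _ (fun j => cmod (ar k) (ai k) * (dyadic_weight j * ind (2 ^ S j * N0)%nat k)))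
      by (intros; ring).
    rewrite sum_lt_scal. apply Rmult_le_compat_l; [apply cmod_nonneg|].
    apply pow_le_dyadic_sum; auto.
    pose proof (Hmono k m ltac:(lia)). pose proof (pow2_gt (S (n m))). nia.
  - rewrite sum_lt_swap. apply sum_lt_le. intros j _. rewrite sum_lt_scal.
    apply Rmult_le_compat_l; [apply dyadic_weight_nonneg|]. apply partial_coef_sum_le; auto.
Qed.

Lemma dyadic_coef_sum_le v D n ar ai gam C r N0 L : doubling v D -> 0 <= gam ->
  (forall N : nat, (1 <= N)%nat -> coef_sum n ar ai N <= gam * g v (INR N)) ->
  (forall J, sum_lt (fun j => D ^ S j * dyadic_weight j) J <= C) ->
  (1 <= N0)%nat -> g v (INR N0) <= v r -> 0 <= v r ->
  sum_lt (fun j => dyadic_weight j * coef_sum n ar ai (2 ^ S j * N0)) L <= gam * C * v r.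
Proof.
  intros Hd Hgam Hcoef HC HN0 Hg Hv. assert (HN0R : 1 <= INR N0) by (apply (le_INR 1); auto).
  destruct Hd as [HD Hd'].
  apply Rle_trans with (sum_lt (fun j => (gam * v r) * (D ^ S j * dyadic_weight j)) L).
  - apply sum_lt_le. intros j _.
    replace (gam * v r * (D ^ S j * dyadic_weight j)) with (dyadic_weight j * (gam * (D ^ S j * v r)))
      by ring.
    apply Rmult_le_compat_l; [apply dyadic_weight_nonneg|].
    eapply Rle_trans; [apply Hcoef; pose proof (pow2_gt (S j)); nia|].
    rewrite mult_INR, pow_INR. simpl (INR 2).
    eapply Rle_trans; [apply Rmult_le_compat_l; [lra|apply (g_pow2 v D); [split|]; auto]|].
    apply Rmult_le_compat_l; [lra|]. apply Rmult_le_compat_l; [apply pow_le; lra|auto].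
  - rewrite sum_lt_scal. pose proof (HC L).
    assert (0 <= gam * v r) by nra. nra.
Qed.

Lemma coef_sum_bound_kv v D lam n ar ai :
  standing v -> doubling v D -> 1 < lam -> (forall k, (0 < n k)%nat) ->
  (forall k, INR (n (S k)) >= lam * INR (n k)) ->
  (exists gamma, gamma > 0 /\ forall N : nat, (1 <= N)%nat -> coef_sum n ar ai N <= gamma * g v (INR N)) ->
  in_kv v n ar ai.
Proof.
  intros Hv Hd Hl Hn Hgap [gam [Hgam Hcoef]].
  destruct (dyadic_weight_series_bounded D (proj1 Hd)) as [C [HC HCb]].
  exists (gam * C). split; [apply Rmult_lt_0_compat; lra|].
  intros r t l Hr Hl0.
  destruct (radius_scale v r Hv Hr) as [N0 [HN0 [Hg Hhalf]]].
  assert (Hvr : 0 <= v r) by (pose proof (proj1 Hv r Hr); lra).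
  apply (Un_cv_le_const _ _ _ Hl0). intro m. rewrite sum_f_R0_sum_lt.
  eapply Rle_trans; [apply (sum_lt_le _ (fun k => cmod (ar k) (ai k) * r ^ n k))|].
  { intros k _. eapply Rle_trans; [apply Rle_abs|]. apply re_term_abs_le. lra. }
  eapply Rle_trans; [apply (abel_sum_le_dyadic n ar ai r N0); auto; try lra|].
  - apply (hadamard_gt_index n lam Hl Hn Hgap).
  - apply (hadamard_mono n lam Hl Hn Hgap).
  - apply (dyadic_coef_sum_le v D); auto. lra.
Qed.

Theorem theorem2 (v : R -> R) (D : R) (lam : R) (n : nat -> nat) (ar ai : nat -> R) :
  standing v -> doubling v D ->
  1 < lam ->
  (forall k, (0 < n k)%nat) ->
  (forall k, INR (n (S k)) >= lam * INR (n k)) ->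
  converges_in_disk n ar ai ->
  (in_kv v n ar ai <->
   exists gamma, gamma > 0 /\
     forall N : nat, (1 <= N)%nat -> coef_sum n ar ai N <= gamma * g v (INR N)).
Proof.
  intros Hv Hd Hl Hn Hgap Hc. split.
  - apply (kv_coef_sum_bound v D lam); auto.
  - apply (coef_sum_bound_kv v D lam); auto.
Qed.
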